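(* Let $P\in\mathfrak N_2$, let $r:P\to R$ be a retraction with $r[P(0)]=R(0)\subseteq P(0)$, and let $f:P(0)\to P(0)$ be an idempotent map with $|f[P(0)]|=|R(0)|$. Then there is a retraction $s:P\to S$ with $S\cong R$ and $s(x)=f(x)$ for all $x\in P(0)$.
   Context: All posets are finite; $h_P$ is the height; level sets $P(0)=\min P$, $P(k+1)=\min(P\setminus\bigcup_{i\le k}P(i))$; $R(0)$ is the set of minimal elements of $R$. $A<B$ means $a<b$ for all $a\in A,b\in B$. A retraction $r:P\to R$ is an idempotent order-preserving self-map of $P$ with image $R$. A section of width three is a poset $P$ of height $h_P\ge1$ with carrier $\{c_{k,j}:k\in[0,h_P],j\in\{0,1,2\}\}$ such that: $c_{0,j}<\dots<c_{h_P,j}$ for each $j$; each $\{c_{k,0},c_{k,1},c_{k,2}\}$ is an antichain; $c_{k,i}<c_{\ell,j}\Rightarrow c_{k,i+1}<c_{\ell,j+1}$ (indices mod 3); and for no $k$ is $P(k)<P(k+1)$. It is nice if for all $x<y$: $\{z:z>x\}\not\subseteq\{z:z\ge y\}$ and $\{z:z<y\}\not\subseteq\{z:z\le x\}$. $\mathfrak N_2$ is the class of nice sections of width three of height $\ge2$ with horizon 2, i.e. $P(k)<P(\ell)$ whenever $\ell\ge k+2$, and not $P(k)<P(k+1)$ for any $k$. *)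

From mathcomp Require Import all_boot.
Set Implicit Arguments. Unset Strict Implicit. Unset Printing Implicit Defensive.

Section FinPoset.
Variable T : finType.
Variable le : rel T.

Definition is_poset : Prop :=
  [/\ reflexive le, antisymmetric le & transitive le].

Definition ltp (x y : T) : bool := (x != y) && le x y.

Definition minimal (A : {set T}) : {set T} :=
  [set x in A | [forall y in A, ~~ ltp y x]].

Fixpoint levels_upto (k : nat) : {set T} :=
  match k with
  | 0 => minimal [set: T]
  | k'.+1 => levels_upto k' :|: minimal (~: levels_upto k')
  end.

(* level sets: P(0) = min P, P(k+1) = min (P \ U_{i<=k} P(i)) *)
Definition level (k : nat) : {set T} :=
  match k with
  | 0 => minimal [set: T]
  | k'.+1 => minimal (~: levels_upto k')
  end.

Definition set_below (A B : {set T}) : Prop :=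
  forall a b, a \in A -> b \in B -> ltp a b.

Definition has_height (h : nat) : Prop :=
  (exists s : seq T, sorted ltp s /\ size s = h.+1) /\
  (forall s : seq T, sorted ltp s -> size s <= h.+1).

Definition nice : Prop :=
  forall x y, ltp x y ->
    (exists z, ltp x z && ~~ le y z) /\ (exists z, ltp z y && ~~ le z x).

(* retraction: idempotent order-preserving self-map (its image is the retract) *)
Definition retraction (r : T -> T) : Prop :=
  (forall x, r (r x) = r x) /\ (forall x y, le x y -> le (r x) (r y)).

Definition iso_subposets (S R : {set T}) : Prop :=
  exists phi psi : T -> T,
    [/\ {in S, forall x, phi x \in R}, {in R, forall y, psi y \in S},
        {in S, forall x, psi (phi x) = x}, {in R, forall y, phi (psi y) = y}
      & {in S &, forall x y, le x y = le (phi x) (phi y)}].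

End FinPoset.

(* carrier of a section of width three: c_{k,j} = (k, j), k in [0,h], j in {0,1,2} *)
Definition sec_carrier (h : nat) : finType := ('I_h.+1 * 'I_3)%type.

Definition section3 (h : nat) (le : rel (sec_carrier h)) : Prop :=
  [/\ is_poset le, has_height le h, 1 <= h &
    [/\ (forall (j : 'I_3) (k l : 'I_h.+1), k < l -> ltp le (k, j) (l, j)),
      (forall (k : 'I_h.+1) (i j : 'I_3), le (k, i) (k, j) -> i = j),
      (forall (k l : 'I_h.+1) (i j : 'I_3),
          ltp le (k, i) (l, j) -> ltp le (k, ordS i) (l, ordS j))
    & (forall k, k < h -> ~ set_below le (level le k) (level le k.+1))]].

Definition horizon2 (h : nat) (le : rel (sec_carrier h)) : Prop :=
  forall k l, k.+2 <= l -> set_below le (level le k) (level le l).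

Definition in_N2 (h : nat) (le : rel (sec_carrier h)) : Prop :=
  [/\ section3 le, nice le, 2 <= h & horizon2 le].

From mathcomp Require Import all_boot all_algebra ring.
Import GRing.Theory.
Set Implicit Arguments. Unset Strict Implicit. Unset Printing Implicit Defensive.

(* In a section of width three with horizon 2 the order is rigid: comparable
   elements lie in increasing rows, rows two apart are entirely comparable, and
   between adjacent rows k, k+1 the relation is (k, i) <= (k+1, j) iff j - i lies
   in a fixed subset of Z/3, because the order is invariant under rotating the
   columns.  Every subset of Z/3 is symmetric under some reflection e |-> d - e,
   so besides the rotations there are order automorphisms reflecting every row;
   on P(0) these realise the dihedral group of Z/3, i.e. all permutations of
   P(0).  Two idempotent self-maps of a 3-element set with images of the same
   size are conjugate by a permutation, so f = a o r o a^-1 on P(0) for such an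
   automorphism a, and s := a o r o a^-1 is the required retraction. *)

Section OrderAutomorphisms.
Variables (T : finType) (le : rel T).

Definition order_aut (a a' : T -> T) : Prop :=
  [/\ cancel a a', cancel a' a & forall x y, le (a x) (a y) = le x y].

Lemma order_aut_id : order_aut id id.
Proof. by []. Qed.

Lemma order_aut_comp a a' b b' :
  order_aut a a' -> order_aut b b' -> order_aut (a \o b) (b' \o a').
Proof.
move=> [aK a'K le_a] [bK b'K le_b]; split=> [x|x|x y] /=.
- by rewrite aK bK.
- by rewrite b'K a'K.
- by rewrite le_a le_b.
Qed.

Lemma retraction_conj a a' r :
  order_aut a a' -> retraction le r -> retraction le (a \o r \o a').
Proof.
move=> [aK a'K le_a] [rK le_r]; split=> [x|x y le_xy] /=.
- by rewrite aK rK.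
- by rewrite le_a; apply: le_r; rewrite -le_a !a'K.
Qed.

Lemma iso_subposets_conj a a' r :
  order_aut a a' -> iso_subposets le ((a \o r \o a') @: setT) (r @: setT).
Proof.
move=> [aK a'K le_a]; exists a', a; split.
- by move=> _ /imsetP[x _ ->]; rewrite /= aK imset_f ?inE.
- by move=> _ /imsetP[x _ ->]; apply/imsetP; exists (a x); rewrite ?inE //= aK.
- by move=> x _; apply: a'K.
- by move=> y _; apply: aK.
- by move=> x y _ _; rewrite -{1}(a'K x) -{1}(a'K y) le_a.
Qed.

End OrderAutomorphisms.

Lemma card_imsetT_undup (T U : finType) (f : T -> U) (s : seq T) :
  (forall x, x \in s) -> #|f @: [set: T]| = size (undup (map f s)).
Proof.
move=> sT; rewrite -(card_uniqP (undup_uniq _)); apply: eq_card => y.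
rewrite mem_undup; apply/imsetP/mapP => [[x _ ->]|[x _ ->]]; by exists x.
Qed.

(* Facts about functions on 'I_3 are decided by enumerating their value tables
   [:: g 0; g 1; g 2]. *)
Definition ord3 : seq 'I_3 := [:: @Ordinal 3 0 isT; @Ordinal 3 1 isT; @Ordinal 3 2 isT].

Lemma mem_ord3 (j : 'I_3) : j \in ord3.
Proof. by case: j => [[|[|[|]]] ?]. Qed.

Lemma nth_ord3 (A : Type) (x0 : A) (g : 'I_3 -> A) (j : 'I_3) :
  nth x0 (map g ord3) j = g j.
Proof. by case: j => [[|[|[|]]] ?] //=; congr g; apply: val_inj. Qed.

Lemma all_graphs3 (A : eqType) (s : seq A) (Q : seq A -> bool) :
  (forall x, x \in s) ->
  all (fun a => all (fun b => all (fun c => Q [:: a; b; c]) s) s) s ->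
  forall g : 'I_3 -> A, Q (map g ord3).
Proof.
move=> sA /allP Q3 g.
move/(_ _ (sA (g (@Ordinal 3 0 isT)))): Q3.
by move=> /allP/(_ _ (sA (g (@Ordinal 3 1 isT))))/allP/(_ _ (sA (g (@Ordinal 3 2 isT)))).
Qed.

Definition has_reflection_axis3 (t : seq bool) : bool :=
  has (fun d => all (fun e => nth false t (d - e : 'I_3)%R == nth false t e) ord3) ord3.

Lemma has_reflection_axis3_all : all (fun a => all (fun b => all (fun c =>
  has_reflection_axis3 [:: a; b; c]) [:: true; false]) [:: true; false]) [:: true; false].
Proof. by vm_compute. Qed.

Lemma Z3_reflection_axis (p : 'I_3 -> bool) :
  exists d : 'I_3, [forall e, p (d - e)%R == p e].
Proof.
have bools (b : bool) : b \in [:: true; false] by case: b.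
have /hasP[d _ /allP pd] := all_graphs3 bools has_reflection_axis3_all p.
by exists d; apply/forallP => e; have := pd e (mem_ord3 e); rewrite !nth_ord3.
Qed.

Definition dihedral3 (b : bool) (c j : 'I_3) : 'I_3 := ((if b then - j else j) + c)%R.
Definition dihedral3_inv (b : bool) (c j : 'I_3) : 'I_3 :=
  (if b then - (j - c) else j - c)%R.

Definition idempotent_graph3 (t : seq 'I_3) : bool :=
  all (fun j => nth j t (nth j t j) == nth j t j) ord3.

Definition dihedral_conj_graph3 (t1 t2 : seq 'I_3) : bool :=
  has (fun b => has (fun c => all (fun j =>
    nth j t1 j == dihedral3 b c (nth j t2 (dihedral3_inv b c j))) ord3) ord3) [:: true; false].

Definition rank_conj_graph3 (t1 t2 : seq 'I_3) : bool :=
  [==> idempotent_graph3 t1, idempotent_graph3 t2,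
     size (undup t1) == size (undup t2) => dihedral_conj_graph3 t1 t2].

Lemma rank_conj_graph3_all :
  all (fun a => all (fun b => all (fun c => all (fun a' => all (fun b' => all (fun c' =>
    rank_conj_graph3 [:: a; b; c] [:: a'; b'; c']) ord3) ord3) ord3) ord3) ord3) ord3.
Proof. by vm_compute. Qed.

Lemma idempotent3_dihedral_conj (g1 g2 : 'I_3 -> 'I_3) :
  idempotent_fun g1 -> idempotent_fun g2 -> #|g1 @: setT| = #|g2 @: setT| ->
  exists b c, forall j, g1 j = dihedral3 b c (g2 (dihedral3_inv b c j)).
Proof.
move=> idem1 idem2 rank12.
have idem_graph g : idempotent_fun g -> idempotent_graph3 (map g ord3).
  by move=> idem; apply/allP => j _; rewrite !nth_ord3; apply/eqP; apply: idem.
have := all_graphs3 (Q := fun t1 => all (fun a' => all (fun b' => all (fun c' =>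
  rank_conj_graph3 t1 [:: a'; b'; c']) ord3) ord3) ord3) mem_ord3 rank_conj_graph3_all g1.
move/(all_graphs3 (Q := rank_conj_graph3 (map g1 ord3)) mem_ord3)/(_ g2).
rewrite /rank_conj_graph3 !idem_graph // -!(card_imsetT_undup _ mem_ord3) rank12 eqxx /=.
move=> /hasP[b _ /hasP[c _ /allP conj12]]; exists b, c => j.
by move/eqP: (conj12 j (mem_ord3 j)); rewrite !nth_ord3.
Qed.

Section SectionWidthThree.
Variables (h : nat) (le : rel (sec_carrier h)).
Hypotheses (sec_le : section3 le) (hor_le : horizon2 le).
Local Notation T := (sec_carrier h).

Lemma sec_le_refl : reflexive le.
Proof. by case: sec_le => -[]. Qed.

Lemma sec_le_anti : antisymmetric le.
Proof. by case: sec_le => -[]. Qed.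

Lemma sec_le_trans : transitive le.
Proof. by case: sec_le => -[]. Qed.

Lemma ltp_column (j : 'I_3) (k l : 'I_h.+1) : k < l -> ltp le (k, j) (l, j).
Proof. by case: sec_le => _ _ _ [col _ _ _]; apply: col. Qed.

Lemma row_antichain (k : 'I_h.+1) (i j : 'I_3) : le (k, i) (k, j) -> i = j.
Proof. by case: sec_le => _ _ _ [_ anti _ _]; apply: anti. Qed.

Lemma ltp_ordS (k l : 'I_h.+1) (i j : 'I_3) :
  ltp le (k, i) (l, j) -> ltp le (k, ordS i) (l, ordS j).
Proof. by case: sec_le => _ _ _ [_ _ rot _]; apply: rot. Qed.

Lemma le_row (x y : T) : le x y -> x.1 <= y.1.
Proof.
case: x y => [k i] [l j] /= le_xy; rewrite leqNgt; apply/negP => lt_lk.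
have /andP[_ le_lk] := ltp_column j lt_lk.
have eq_ij := row_antichain (sec_le_trans le_xy le_lk); subst j.
have [eq_kl] : (k, i) = (l, i) by apply: sec_le_anti; rewrite le_xy.
by rewrite eq_kl ltnn in lt_lk.
Qed.

Lemma le_same_row (x y : T) : x.1 = y.1 -> le x y = (x == y).
Proof.
case: x y => [k i] [l j] /= <-; apply/idP/eqP => [/row_antichain -> //|->].
exact: sec_le_refl.
Qed.

Lemma ltp_row (x y : T) : ltp le x y -> x.1 < y.1.
Proof.
move=> /andP[neq_xy le_xy]; rewrite ltn_neqAle le_row // andbT.
apply: contra neq_xy => /eqP same_row.
by rewrite -le_same_row //; apply: val_inj.
Qed.

Lemma minimal_rows_from k :
  k <= h -> minimal le [set x : T | k <= x.1] = [set x : T | x.1 == k :> nat].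
Proof.
move=> le_kh; apply/setP => x; rewrite !inE.
case: (ltngtP k x.1) => [lt_kx|//|eq_kx] /=.
- apply/negbTE/forall_inP => /(_ (inord k, x.2)).
  rewrite inE inordK // leqnn => /(_ isT)/negP; apply.
  by case: x lt_kx => l j lt_kx; apply: ltp_column; rewrite inordK.
- apply/forall_inP => y; rewrite inE eq_kx leqNgt.
  by apply: contra => /ltp_row.
Qed.

Lemma minimal_setT : minimal le [set: T] = [set x : T | x.1 == 0 :> nat].
Proof. by rewrite -minimal_rows_from //; congr minimal. Qed.

Lemma levels_upto_row k : k <= h -> levels_upto le k = [set x : T | x.1 <= k].
Proof.
elim: k => [|k IHk] le_kh /=.
  by rewrite minimal_setT; apply/setP => x; rewrite !inE leqn0.
rewrite IHk 1?ltnW //.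
have -> : ~: [set x : T | x.1 <= k] = [set x : T | k.+1 <= x.1].
  by apply/setP => x; rewrite !inE ltnNge.
rewrite minimal_rows_from //; apply/setP => x.
by rewrite !inE [in RHS]leq_eqVlt ltnS orbC.
Qed.

Lemma level_row k : k <= h -> level le k = [set x : T | x.1 == k :> nat].
Proof.
case: k => [|k] le_kh /=; first exact: minimal_setT.
rewrite levels_upto_row 1?ltnW // -minimal_rows_from //; congr minimal.
by apply/setP => x; rewrite !inE ltnNge.
Qed.

Lemma ltp_far (x y : T) : x.1.+2 <= y.1 -> ltp le x y.
Proof.
move=> far_xy; apply: (hor_le far_xy).
- by rewrite level_row ?inE // -ltnS.
- by rewrite level_row ?inE // -ltnS.
Qed.

Lemma le_eq_ltp (x y : T) : le x y = (x == y) || ltp le x y.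
Proof. by rewrite /ltp; case: eqP => [->|]; rewrite ?sec_le_refl. Qed.

Lemma le_ordS (k l : 'I_h.+1) (i j : 'I_3) :
  le (k, ordS i) (l, ordS j) = le (k, i) (l, j).
Proof.
have ordS3 (a : 'I_3) : ordS (ordS (ordS a)) = a.
  by apply: val_inj; case: a => [[|[|[|]]] ?].
rewrite !le_eq_ltp !xpair_eqE (inj_eq (@ordS_inj 3)); congr orb.
by apply/idP/idP => [/ltp_ordS/ltp_ordS|/ltp_ordS //]; rewrite !ordS3.
Qed.

Lemma le_rot (c : 'I_3) (k l : 'I_h.+1) (i j : 'I_3) :
  le (k, i + c)%R (l, j + c)%R = le (k, i) (l, j).
Proof.
rewrite -[c]natr_Zp; elim: (val c) => [|n IHn]; first by rewrite !addr0.
by rewrite mulrSr !addrA !(add_Zp_1 (p := 3)) le_ordS.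
Qed.

Definition adj_pattern (k : nat) (e : 'I_3) : bool := le (inord k, 0%R) (inord k.+1, e).

Lemma le_adjacent (x y : T) :
  y.1 = x.1.+1 :> nat -> le x y = adj_pattern x.1 (y.2 - x.2)%R.
Proof.
case: x y => [k i] [l j] /= eq_l; rewrite -(le_rot (- i)%R) subrr /adj_pattern inord_val.
by congr le; congr pair; apply: val_inj; rewrite /= eq_l inordK // -eq_l.
Qed.

Lemma le_map_from_adjacent (a : T -> T) :
  (forall x, (a x).1 = x.1) -> injective a ->
  (forall x y : T, y.1 = x.1.+1 :> nat -> le (a x) (a y) = le x y) ->
  forall x y, le (a x) (a y) = le x y.
Proof.
move=> row_a inj_a adj_a x y.
have not_le_down (u v : T) : v.1 < u.1 -> le u v = false.
  by move=> lt_vu; apply/negbTE/negP => /le_row; rewrite leqNgt lt_vu.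
case: (ltngtP x.1 y.1) => [lt_xy|lt_yx|eq_xy].
- have ltpW (u v : T) : ltp le u v -> le u v by case/andP.
  case: (ltngtP x.1.+1 y.1) => [far_xy|lt_yx1|adj_xy].
  + by rewrite (ltpW _ _ (ltp_far far_xy)) ltpW // ltp_far // !row_a.
  + by rewrite ltnS leqNgt lt_xy in lt_yx1.
  + by apply: adj_a; rewrite adj_xy.
- by rewrite !not_le_down ?row_a.
- by rewrite !le_same_row ?row_a ?(inj_eq inj_a) //; apply: val_inj.
Qed.

Definition reflection_axis (k : nat) : 'I_3 := xchoose (Z3_reflection_axis (adj_pattern k)).

Lemma adj_pattern_reflect k e :
  adj_pattern k (reflection_axis k - e)%R = adj_pattern k e.
Proof. by have /forallP/(_ e)/eqP := xchooseP (Z3_reflection_axis (adj_pattern k)). Qed.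

(* Row k is reflected by j |-> reflection_offset k - j; consecutive offsets
   differ by the symmetry axis of the pattern between the two rows. *)
Fixpoint reflection_offset (k : nat) : 'I_3 :=
  if k is k'.+1 then (reflection_offset k' + reflection_axis k')%R else 0%R.

Definition sec_rot (c : 'I_3) (x : T) : T := (x.1, x.2 + c)%R.
Definition sec_refl (x : T) : T := (x.1, reflection_offset x.1 - x.2)%R.

Lemma sec_rot_aut c : order_aut le (sec_rot c) (sec_rot (- c)%R).
Proof.
by split=> [[k j]|[k j]|[k i] [l j]]; rewrite /sec_rot /= ?addrK ?addrNK ?le_rot.
Qed.

Lemma sec_refl_aut : order_aut le sec_refl sec_refl.
Proof.
have reflK : involutive sec_refl by case=> k j; rewrite /sec_refl subKr.
split=> //; apply: le_map_from_adjacent => // [|x y adj_xy].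
  exact: inv_inj.
rewrite !le_adjacent //= adj_xy /= -adj_pattern_reflect; congr adj_pattern.
ring.
Qed.

Definition sec_dihedral (b : bool) (c : 'I_3) : T -> T :=
  sec_rot c \o (if b then sec_refl else id).
Definition sec_dihedral_inv (b : bool) (c : 'I_3) : T -> T :=
  (if b then sec_refl else id) \o sec_rot (- c)%R.

Lemma sec_dihedral_aut b c : order_aut le (sec_dihedral b c) (sec_dihedral_inv b c).
Proof.
apply: order_aut_comp; first exact: sec_rot_aut.
by case: b; [exact: sec_refl_aut | exact: order_aut_id].
Qed.

Lemma sec_dihedral_row0 b c j : sec_dihedral b c (ord0, j) = (ord0, dihedral3 b c j).
Proof. by case: b; rewrite /sec_dihedral /sec_rot /sec_refl /= ?sub0r. Qed.

Lemma sec_dihedral_inv_row0 b c j :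
  sec_dihedral_inv b c (ord0, j) = (ord0, dihedral3_inv b c j).
Proof. by case: b; rewrite /sec_dihedral_inv /sec_rot /sec_refl /= ?sub0r. Qed.

Definition row0_map (g : T -> T) (j : 'I_3) : 'I_3 := (g (ord0, j)).2.

Lemma level0_row0 : level le 0 = pair ord0 @: [set: 'I_3].
Proof.
rewrite level_row //; apply/setP => -[k j]; rewrite inE.
apply/eqP/imsetP => [k0|[i _ [-> _]] //].
by exists j; rewrite // (_ : k = ord0) //; apply: val_inj.
Qed.

Section Row0Map.
Variable g : T -> T.
Hypothesis g_level0 : {in level le 0, forall x, g x \in level le 0}.

Lemma row0_mapE j : g (ord0, j) = (ord0, row0_map g j).
Proof.
have /g_level0 : (ord0, j) \in level le 0 by rewrite level0_row0 imset_f ?inE.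
by rewrite level0_row0 /row0_map => /imsetP[i _ ->].
Qed.

Lemma row0_map_idem : {in level le 0, forall x, g (g x) = g x} ->
  idempotent_fun (row0_map g).
Proof.
move=> g_idem j; rewrite /= {1}/row0_map -row0_mapE g_idem //.
by rewrite level0_row0 imset_f ?inE.
Qed.

Lemma card_row0_map : #|g @: level le 0| = #|row0_map g @: setT|.
Proof.
rewrite level0_row0 -imset_comp (eq_imset _ row0_mapE) imset_comp card_imset //.
by move=> i j [].
Qed.

End Row0Map.

End SectionWidthThree.

Theorem corollary4p2 (h : nat) (le : rel (sec_carrier h))
  (r f : sec_carrier h -> sec_carrier h) :
  in_N2 le ->
  retraction le r ->
  r @: level le 0 = minimal le (r @: [set: sec_carrier h]) ->
  minimal le (r @: [set: sec_carrier h]) \subset level le 0 ->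
  {in level le 0, forall x, f x \in level le 0} ->
  {in level le 0, forall x, f (f x) = f x} ->
  #|f @: level le 0| = #|minimal le (r @: [set: sec_carrier h])| ->
  exists s : sec_carrier h -> sec_carrier h,
    [/\ retraction le s,
        iso_subposets le (s @: [set: sec_carrier h]) (r @: [set: sec_carrier h])
      & {in level le 0, forall x, s x = f x}].
Proof.
move=> [sec_le _ _ hor_le] r_retr r_min min_level0 f_level0 f_idem card_f.
have r_level0 : {in level le 0, forall x, r x \in level le 0}.
  by move=> x x0; apply: (subsetP min_level0); rewrite -r_min imset_f.
have r_idem : {in level le 0, forall x, r (r x) = r x}.
  by case: r_retr => r_idem _; apply: in1W.
have card_fr : #|row0_map f @: setT| = #|row0_map r @: setT|.
  by rewrite -(card_row0_map sec_le f_level0) -(card_row0_map sec_le r_level0) r_min card_f.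
have [b [c fr_conj]] := idempotent3_dihedral_conj
  (row0_map_idem sec_le f_level0 f_idem) (row0_map_idem sec_le r_level0 r_idem) card_fr.
have aut := sec_dihedral_aut sec_le hor_le b c.
exists (sec_dihedral le b c \o r \o sec_dihedral_inv le b c); split.
- exact: retraction_conj aut r_retr.
- exact: iso_subposets_conj aut.
- move=> x; rewrite (level0_row0 sec_le) => /imsetP[j _ ->] /=.
  rewrite sec_dihedral_inv_row0 (row0_mapE sec_le r_level0) sec_dihedral_row0.
  by rewrite (row0_mapE sec_le f_level0) fr_conj.
Qed.
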